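(* Let $W=a_1a_2\cdots a_n$ be a square-free word, where each $a_i$ is a single letter, and let $V=a_1^{k_1}a_2^{k_2}\cdots a_n^{k_n}$, where each $k_i$ is a positive integer. Then every square occurring as a factor of $V$ is of the form $x^{2k}$ for some positive integer $k$, where $x=a_i$ for some $i\in\{1,2,\dots,n\}$.
   Context: A square is a finite non-empty word of the form $XX$; a word is square-free if it has no factor that is a square. $x^m$ denotes the letter $x$ repeated $m$ times. *)

From mathcomp Require Import all_boot.
Set Implicit Arguments. Unset Strict Implicit. Unset Printing Implicit Defensive.

(* Words over an alphabet T are sequences [seq T]; a factor is a contiguous
   subword ([infix] from seq.v). *)

Definition is_square (T : eqType) (u : seq T) : Prop :=
  exists X : seq T, X <> [::] /\ u = X ++ X.

Definition square_free (T : eqType) (w : seq T) : Prop :=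
  forall u : seq T, infix u w -> ~ is_square u.

(* expand W ks = a_1^{k_1} a_2^{k_2} ... a_n^{k_n} where W = a_1...a_n,
   ks = [k_1; ...; k_n]. *)
Definition expand (T : eqType) (W : seq T) (ks : seq nat) : seq T :=
  flatten [seq nseq p.2 p.1 | p <- zip W ks].

From mathcomp Require Import all_boot.
Set Implicit Arguments. Unset Strict Implicit. Unset Printing Implicit Defensive.

(* Let [compress] collapse every maximal run of equal letters to a single
   letter.  It maps factors to factors, sends [expand W ks] to [compress W],
   and fixes the square-free word [W]; so the compression of a square factor
   [u = XX] of [V] is a factor of [W], hence square-free.  If [u] were not
   constant, its compression would still contain a square: with
   [c = compress X], it is [cc] when [X] begins and ends with different
   letters, and it contains [(x Z)(x Z)] when [c = x Z x]. *)

Section Compress.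
Variable T : eqType.
Implicit Types (s t : seq T) (x y : T).

Fixpoint compress s : seq T :=
  match s with
  | x :: (y :: _) as s' => if x == y then compress s' else x :: compress s'
  | _ => s
  end.

Lemma compress_cons2 x y s : compress (x :: y :: s) =
  if x == y then compress (y :: s) else x :: compress (y :: s).
Proof. by []. Qed.

Arguments compress : simpl never.

Lemma compress_cons x s : compress (x :: s) = x :: behead (compress (x :: s)).
Proof.
elim: s x => [|y s IH] x //.
by rewrite compress_cons2; case: eqP => [<-|//]; apply: IH.
Qed.

Lemma mem_compress s : compress s =i s.
Proof.
elim: s => [|x [|y s] IH] z //.
rewrite compress_cons2; case: eqP => [->|_]; first by rewrite IH !in_cons orbA orbb.
by rewrite in_cons IH -in_cons.
Qed.

Lemma last_compress d x s : last d (compress (x :: s)) = last x s.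
Proof.
elim: s x d => [|y s IH] x d //.
rewrite compress_cons2 /=; case: eqP => _; first exact: IH.
by rewrite compress_cons /= -(IH y y) [in RHS]compress_cons.
Qed.

Lemma compress_cat x s y t :
  compress (x :: s ++ y :: t) = compress (x :: s) ++
    (if last x s == y then behead (compress (y :: t)) else compress (y :: t)).
Proof.
elim: s x => [|z s IH] x /=.
  by rewrite compress_cons2; case: eqP => [->|_] //; apply: compress_cons.
by rewrite !compress_cons2 IH; case: eqP.
Qed.

Lemma prefix_compress_cat s t : prefix (compress s) (compress (s ++ t)).
Proof.
apply/prefixP; case: s => [|x s]; first by exists (compress t).
case: t => [|y t]; first by exists [::]; rewrite !cats0.
by rewrite cat_cons compress_cat; eexists.
Qed.

Lemma suffix_compress_cat s t : suffix (compress t) (compress (s ++ t)).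
Proof.
apply/suffixP; case: s => [|x s]; first by exists [::].
case: t => [|y t]; first by exists (compress (x :: s)); rewrite !cats0.
rewrite cat_cons compress_cat; case: eqP => [lasts|_]; last by eexists.
move: (last_compress x x s) (compress_cons x s); rewrite lasts.
case/lastP: (compress (x :: s)) => [//|p z]; rewrite last_rcons => -> _.
by exists p; rewrite [compress (y :: t)]compress_cons cat_rcons.
Qed.

Lemma compress_infix s t : infix s t -> infix (compress s) (compress t).
Proof.
case/infixP=> [p [r ->]].
exact: prefix_suffix_trans (prefix_compress_cat s r) (suffix_compress_cat p _).
Qed.

Lemma constant_compress s : constant s = (size (compress s) <= 1).
Proof.
elim: s => [|x [|y s] IH] //.
rewrite compress_cons2 /= eq_sym; case: eqP => [->|_]; first exact: IH.
by rewrite compress_cons.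
Qed.

Lemma eq_compress_cons x s t :
  compress s = compress t -> compress (x :: s) = compress (x :: t).
Proof.
case: s => [|y s]; case: t => [|z t] // e.
- by move: e; rewrite [compress (z :: t)]compress_cons.
- by move: e; rewrite [compress (y :: s)]compress_cons.
have yz : y = z.
  move: e; rewrite [compress (y :: s)]compress_cons.
  by rewrite [compress (z :: t)]compress_cons => -[].
by rewrite !compress_cons2 e yz.
Qed.

Lemma square_free_infix s t : infix s t -> square_free t -> square_free s.
Proof. by move=> st sft u /infix_trans/(_ st); apply: sft. Qed.

Lemma constant_square_free_compress u :
  is_square u -> square_free (compress u) -> constant u.
Proof.
case=> [[|x X] [nX ->]]; first by case: nX.
rewrite constant_compress cat_cons compress_cat.
case: eqP => [lastx|_] sf; last first.
  case: (sf _ (infix_refl _)); exists (compress (x :: X)) => //.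
  by rewrite compress_cons.
move: sf (last_compress x x X); rewrite compress_cons lastx.
case/lastP: (behead _) => [//|Z z] /=; rewrite last_rcons => sf zx.
case: (sf ((x :: Z) ++ (x :: Z))); last by exists (x :: Z).
by apply: (@catr_infix _ [:: x]); rewrite zx -!cats1 -!catA; apply: infix_refl.
Qed.

Lemma compress_nseq k x s : compress (nseq k.+1 x ++ s) = compress (x :: s).
Proof. by elim: k => // k IH; rewrite [nseq _ _ ++ _]/= compress_cons2 eqxx. Qed.

Lemma compress_expand W ks : size ks = size W -> all (fun k => 0 < k) ks ->
  compress (expand W ks) = compress W.
Proof.
elim: W ks => [|a W IH] [|k ks] //= [sz] /andP[k_gt0 pos].
rewrite /expand /= -/(expand W ks) -(prednK k_gt0) compress_nseq.
exact/eq_compress_cons/IH.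
Qed.

Lemma compress_id s : sorted (fun x y => x != y) s -> compress s = s.
Proof.
by elim: s => [|x [|y s] IH] //= /andP[xy sy]; rewrite compress_cons2 (negbTE xy) IH.
Qed.

Lemma square_free_sorted_neq s : square_free s -> sorted (fun x y => x != y) s.
Proof.
elim: s => [|x [|y s] IH] // sf; apply/andP; split.
  apply/eqP=> xy; apply: (sf [:: x; x]); last by exists [:: x].
  by rewrite {2}xy; apply: (prefix_infix [:: x; y]).
by apply/IH/(square_free_infix _ sf)/infix_cons.
Qed.

End Compress.

Theorem lemma2p8 (T : eqType) (W : seq T) (ks : seq nat) :
  square_free W ->
  size ks = size W ->
  (forall i, i < size ks -> 0 < nth 0 ks i) ->
  forall u : seq T, infix u (expand W ks) -> is_square u ->
  exists (x : T) (k : nat), [/\ x \in W, 0 < k & u = nseq (2 * k) x].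
Proof.
move=> sfW sz pos u uV sq_u.
have compressV : compress (expand W ks) = W.
  rewrite compress_expand //; last exact/(all_nthP 0).
  exact/compress_id/square_free_sorted_neq.
have sf_cu : square_free (compress u).
  by apply: square_free_infix sfW; rewrite -compressV; apply: compress_infix.
have [[|x X] [nX uXX]] := sq_u; first by case: nX.
have /(constantP x)[y uy] := constant_square_free_compress sq_u sf_cu.
exists y, (size X).+1; split => //; last by rewrite uy uXX size_cat addnn mul2n.
rewrite -compressV mem_compress; apply: (mem_infix uV).
by rewrite uy uXX mem_nseq eqxx.
Qed.
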